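(* Let $(K,\delta_K^* )$ be an iterative $q$-difference field whose field of constants is $C$. Then for any elements $x_1,\dots,x_r\in K$ which are linearly independent over $C$, the iterative Taylor series $\mathbf T_{x_1},\dots,\mathbf T_{x_r}$ are linearly independent over $K$; that is, if $a_1,\dots,a_r\in K$ satisfy $\sum_{j=1}^ra_j\delta_K^{(k)}(x_j)=0$ for all $k\in\mathbb N$, then $a_1=\dots=a_r=0$.
   Context: Let $C$ be an algebraically closed field and $q\in C$ with $q\ne1$ (possibly a root of unity). Let $F=C(t)$ with the automorphism $\sigma_q(f(t))=f(qt)$. For $r,k\in\mathbb N$, $\binom{r}{k}_q$ is the value at $q$ of the Gaussian polynomial $\prod_{i=1}^{k}\frac{1-x^{r-i+1}}{1-x^{i}}\in\mathbb Z[x]$. An iterative $q$-difference field is a field $K\supseteq F$ with an automorphism $\sigma_q$ extending that of $F$ and maps $\delta_K^{(k)}:K\to K$ ($k\in\mathbb N$) such that for all $a,b\in K$, $i,j,k$: $\delta_K^{(0)}=\mathrm{id}$; $\delta_K^{(1)}=\frac{\sigma_q-\mathrm{id}}{(q-1)t}$; $\delta_K^{(k)}$ additive; $\delta_K^{(k)}(ab)=\sum_{i+j=k}\sigma_q^i(\delta_K^{(j)}(a))\delta_K^{(i)}(b)$; $\delta_K^{(i)}\circ\delta_K^{(j)}=\binom{i+j}{i}_q\delta_K^{(i+j)}$. Its field of constants is $\{c\in K:\delta_K^{(k)}(c)=0\ \forall k\ge1\}$. The iterative Taylor series of $a\in K$ is $\mathbf T_a=\sum_{k\in\mathbb N}\delta_K^{(k)}(a)T^k\in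 K[[T]]$. *)

From HB Require Import structures.
From mathcomp Require Import all_boot all_order all_algebra.
Set Implicit Arguments. Unset Strict Implicit. Unset Printing Implicit Defensive.
Import GRing.Theory.
Local Open Scope ring_scope.

(* Gaussian polynomial [r choose k]_x in Z[x], defined by the q-Pascal
   recursion [r+1, k+1] = [r, k] + x^(k+1) [r, k+1], [r, 0] = 1,
   [0, k+1] = 0; this is the polynomial prod_{i=1}^k (1-x^(r-i+1))/(1-x^i). *)
Fixpoint gauss_poly (r k : nat) {struct r} : {poly int} :=
  match r, k with
  | _, 0%N => 1
  | 0%N, _.+1 => 0
  | r'.+1, k'.+1 => gauss_poly r' k' + 'X^(k'.+1) * gauss_poly r' k
  end.

Definition qbinom (C : comNzRingType) (q : C) (r k : nat) : C :=
  (map_poly intr (gauss_poly r k)).[q].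

(* K is an iterative q-difference field over F = C(t):
   iota : C -> K and t : K transcendental over iota(C) give the embedding
   F = C(t) ⊆ K; sigma is an automorphism of K extending sigma_q
   (sigma fixes C and sends t to q t); delta k = δ_K^(k). *)
Record is_iter_qdiff_field (C : closedFieldType) (q : C) (K : fieldType)
    (iota : {rmorphism C -> K}) (t : K) (sigma : {rmorphism K -> K})
    (delta : nat -> K -> K) : Prop := {
  iqd_transc : forall p : {poly C}, p != 0 -> (map_poly iota p).[t] != 0;
  iqd_sigma_bij : bijective sigma;
  iqd_sigma_C : forall c : C, sigma (iota c) = iota c;
  iqd_sigma_t : sigma t = iota q * t;
  iqd_delta0 : forall a, delta 0%N a = a;
  iqd_delta1 : forall a, delta 1%N a = (sigma a - a) / ((iota q - 1) * t);
  iqd_additive : forall k a b, delta k (a + b) = delta k a + delta k b;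
  iqd_leibniz : forall k a b,
      delta k (a * b) = \sum_(i < k.+1) iter i sigma (delta (k - i)%N a) * delta i b;
  iqd_iter : forall i j a,
      delta i (delta j a) = iota (qbinom q (i + j) i) * delta (i + j)%N a
}.

Definition iqd_constant (K : fieldType) (delta : nat -> K -> K) (c : K) : Prop :=
  forall k : nat, (0 < k)%N -> delta k c = 0.

(* If the Taylor series of x_1, ..., x_r satisfied a nontrivial K-linear
   relation, take one, b, of minimal support and normalise it so that
   b_{j0} = 1.  Applying δ^(m) to the relations sum_j b_j δ^(k)(x_j) = 0 and
   using the iteration rule δ^(m) ∘ δ^(k) = [m+k, m]_q δ^(m+k) shows, by
   induction on m, that sigma^(-m)(δ^(m)(b_j)) is again a relation, supported
   strictly inside the support of b since δ^(m)(1) = 0; by minimality it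
   vanishes.  Hence every b_j is a constant, i.e. lies in C, and the relation
   for k = 0 contradicts the linear independence of the x_j over C. *)
From mathcomp Require Import all_boot all_order all_algebra.
Set Implicit Arguments. Unset Strict Implicit. Unset Printing Implicit Defensive.
Import GRing.Theory.
Local Open Scope ring_scope.

Lemma iter_can (T : Type) (f g : T -> T) n :
  cancel g f -> cancel (iter n g) (iter n f).
Proof. by move=> gK; elim: n => [|n IHn] y //; rewrite iterSr iterS gK. Qed.

Section IterRmorphism.

Variables (F : fieldType) (f : {rmorphism F -> F}).

Lemma iter_rmorph0 n : iter n f 0 = 0.
Proof. by elim: n => //= n ->; rewrite rmorph0. Qed.

Lemma iter_rmorphM n : {morph iter n f : y z / y * z}.
Proof. by elim: n => // n IHn y z; rewrite !iterS IHn rmorphM. Qed.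

Lemma iter_rmorph_sum n (I : Type) (r : seq I) (P : pred I) (E : I -> F) :
  iter n f (\sum_(i <- r | P i) E i) = \sum_(i <- r | P i) iter n f (E i).
Proof. by elim: n => //= n ->; rewrite rmorph_sum. Qed.

Lemma iter_fmorph_eq0 n y : (iter n f y == 0) = (y == 0).
Proof. by elim: n => //= n <-; rewrite fmorph_eq0. Qed.

End IterRmorphism.

Section TaylorRelations.

Variables (K : fieldType) (sigma : {rmorphism K -> K}) (sigma_inv : K -> K).
Variables (delta : nat -> K -> K) (e : nat -> nat -> K).

Hypothesis sigma_invK : cancel sigma_inv sigma.
Hypothesis delta0 : forall a, delta 0%N a = a.
Hypothesis deltaD : forall k a b, delta k (a + b) = delta k a + delta k b.
Hypothesis deltaM : forall k a b,
  delta k (a * b) = \sum_(i < k.+1) iter i sigma (delta (k - i)%N a) * delta i b.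
Hypothesis delta_delta : forall i j a, delta i (delta j a) = e i j * delta (i + j)%N a.
Hypothesis constant1 : iqd_constant delta 1.

Lemma delta_0 k : delta k 0 = 0.
Proof. by apply: (addrI (delta k 0)); rewrite -deltaD !addr0. Qed.

Lemma delta_sum k (I : Type) (r : seq I) (P : pred I) (E : I -> K) :
  delta k (\sum_(i <- r | P i) E i) = \sum_(i <- r | P i) delta k (E i).
Proof. exact: (big_morph _ (deltaD k) (delta_0 k)). Qed.

Lemma deltaM_lower_constant m a b :
  (0 < m)%N -> (forall i, (0 < i < m)%N -> delta i b = 0) ->
  delta m (a * b) = delta m a * b + iter m sigma a * delta m b.
Proof.
case: m => // m _ b_const; rewrite deltaM big_ord_recr big_ord_recl /= subn0 subnn !delta0.
by rewrite big1 ?addr0 // => i _; rewrite b_const ?mulr0 //= ltnS ltn_ord.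

Qed.

Variables (I : finType) (x : I -> K).

Definition taylor_relation (b : I -> K) :=
  forall k, \sum_j b j * delta k (x j) = 0.

Definition relation_support (b : I -> K) := [set j | b j != 0].

Lemma taylor_relationMr b u : taylor_relation b -> taylor_relation (fun j => b j * u).
Proof.
move=> rel_b k; under eq_bigr do rewrite mulrAC.
by rewrite -mulr_suml rel_b mul0r.
Qed.

Lemma taylor_relation_delta m b :
    (0 < m)%N -> taylor_relation b ->
    (forall i j, (0 < i < m)%N -> delta i (b j) = 0) ->
  taylor_relation (fun j => iter m sigma_inv (delta m (b j))).
Proof.
move=> m_gt0 rel_b b_const k; apply/eqP; rewrite -(iter_fmorph_eq0 sigma m).
rewrite iter_rmorph_sum; apply/eqP.
under eq_bigr do rewrite iter_rmorphM (iter_can _ sigma_invK) mulrC.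
have expand j : delta m (b j * delta k (x j)) =
    e m k * (b j * delta (m + k) (x j)) + iter m sigma (delta k (x j)) * delta m (b j).
  rewrite mulrC (deltaM_lower_constant _ m_gt0 (b_const^~ j)) delta_delta.
  by rewrite -mulrA [delta _ _ * b j]mulrC.
rewrite -[RHS](delta_0 m) -[X in delta m X](rel_b k) delta_sum (eq_bigr _ (fun j _ => expand j)).
by rewrite big_split /= -mulr_sumr rel_b mulr0 add0r.
Qed.

Lemma taylor_relation_constant b j0 :
    taylor_relation b -> b j0 = 1 ->
    (forall c, taylor_relation c ->
       relation_support c \subset relation_support b :\ j0 -> forall j, c j = 0) ->
  forall j, iqd_constant delta (b j).
Proof.
move=> rel_b bj0 b_min j m; elim/ltn_ind: m j => m IHm j m_gt0.
pose c j := iter m sigma_inv (delta m (b j)).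
have inv0 : iter m sigma_inv 0 = 0.
  by apply/eqP; rewrite -(iter_fmorph_eq0 sigma m) (iter_can _ sigma_invK).
have suppc : relation_support c \subset relation_support b :\ j0.
  apply/subsetP => i; rewrite !inE /c; apply: contraR => /nandP[/negbNE/eqP->|].
    by rewrite bj0 constant1 // inv0.
  by move/negbNE/eqP->; rewrite delta_0 inv0.
have rel_c : taylor_relation c.
  by apply: taylor_relation_delta => // i l /andP[i_gt0 ltim]; apply: IHm.
by rewrite -(iter_can m sigma_invK (delta m (b j))) -/(c j) (b_min c) ?iter_rmorph0.
Qed.

Hypothesis x_free : forall c : I -> K,
  (forall j, iqd_constant delta (c j)) -> \sum_j c j * x j = 0 -> forall j, c j = 0.

Lemma taylor_relation_eq0 b : taylor_relation b -> forall j, b j = 0.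
Proof.
have [n] := ubnP #|relation_support b|; elim: n b => // n IHn b.
rewrite ltnS => supp_b rel_b j.
case: (pickP [pred i | b i != 0]) => [j0 /= bj0_neq0|b0]; last first.
  by have /negbFE/eqP := b0 j.
pose b' i := b i / b j0.
have b'j0 : b' j0 = 1 by rewrite /b' divff.
have rel_b' : taylor_relation b' by apply: taylor_relationMr.
have supp_b' : relation_support b' = relation_support b.
  by apply/setP => i; rewrite !inE /b' mulf_eq0 invr_eq0 (negbTE bj0_neq0) orbF.
have b'_const : forall i, iqd_constant delta (b' i).
  apply: (taylor_relation_constant rel_b' b'j0) => c rel_c supp_c; apply: IHn => //.
  apply: (leq_ltn_trans (subset_leq_card supp_c)); rewrite -supp_b' in supp_b.
  by apply: (leq_trans _ supp_b); rewrite [ltnRHS](cardsD1 j0) inE b'j0 oner_neq0.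
have rel0 : \sum_i b' i * x i = 0.
  by under eq_bigr do rewrite -[x _]delta0; exact: rel_b' 0%N.
by have /eqP := x_free b'_const rel0 j0; rewrite b'j0 oner_eq0.
Qed.

End TaylorRelations.

Theorem theorem2p22 (C : closedFieldType) (q : C) (hq : q != 1)
    (K : fieldType) (iota : {rmorphism C -> K}) (t : K)
    (sigma : {rmorphism K -> K}) (delta : nat -> K -> K)
    (hK : is_iter_qdiff_field q iota t sigma delta)
    (hconst : forall c : K, iqd_constant delta c <-> exists c0 : C, c = iota c0)
    (r : nat) (x : 'I_r -> K)
    (hx : forall c : 'I_r -> C, \sum_(j < r) iota (c j) * x j = 0 -> forall j, c j = 0)
    (a : 'I_r -> K)
    (ha : forall k : nat, \sum_(j < r) a j * delta k (x j) = 0) :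
  forall j, a j = 0.
Proof.
case: hK => _ [sigma_inv _ sigma_invK] _ _ delta0 _ deltaD deltaM delta_delta.
have constant1 : iqd_constant delta 1 by apply/hconst; exists 1; rewrite rmorph1.
apply: (taylor_relation_eq0 sigma_invK delta0 deltaD deltaM delta_delta constant1 _ ha) => c c_const.
have [c0 def_c] := fin_all_exists (fun j => (hconst (c j)).1 (c_const j)).
under eq_bigr do rewrite def_c.
by move=> /hx c0_eq0 j; rewrite def_c c0_eq0 rmorph0.
Qed.
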